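(* Let $(k,R,t)\in\mathbb{R}^3$ with $R>0$, $t\neq 0$, $k\neq 0,1$. For a parameter $t$ let $c(t)=\frac{1-t^2}{1+t^2}$, $s(t)=\frac{2t}{1+t^2}$ and let $T_{k,R,t}=\{(x,y,z)\in\mathbb{R}^3: F_1=F_2=0\}$ with $$F_1=y^2-(xs(t)-yc(t))^2+2z-1,\qquad F_2=\bigl(x^2-2kz+R^2+k^2\bigr)^2-4R^2(x^2+y^2).$$ Then the trisectors $T_{k,R,t}$ and $T_{k,R,-t}$ are projectively equivalent (their projective closures in $\mathbb{P}^3$ are related by a projective linear transformation). In particular, the sign of $t$ does not affect the real projective topology of the trisector.
   Context: $T_{k,R,t}$ is the trisector of the $x$-axis $L_1$, the line $L_2$ through $(0,0,1)$ with direction $(c,s,0)$, and the circle of radius $R$ centered at $(0,0,k)$ in the plane $z=k$, defined as the common zero set of the two bisector polynomials above; its projective closure is obtained by homogenizing with $x=X/W$, $y=Y/W$, $z=Z/W$ and saturating with respect to $W$. *)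

From HB Require Import structures.
From mathcomp Require Import all_boot all_order all_algebra.
From mathcomp Require Import mpoly.
Set Implicit Arguments. Unset Strict Implicit. Unset Printing Implicit Defensive.
Import Order.TTheory GRing.Theory Num.Theory.
Local Open Scope ring_scope.

Section Trisector.
Variable R : realFieldType.

Definition cpar (t : R) : R := (1 - t ^+ 2) / (1 + t ^+ 2).
Definition spar (t : R) : R := (2 * t) / (1 + t ^+ 2).

Definition ax : {mpoly R[3]} := 'X_(inord 0).
Definition ay : {mpoly R[3]} := 'X_(inord 1).
Definition az : {mpoly R[3]} := 'X_(inord 2).

Definition F1 (t : R) : {mpoly R[3]} :=
  ay ^+ 2 - (ax * (spar t)%:MP - ay * (cpar t)%:MP) ^+ 2 + 2%:MP * az - 1.

Definition F2 (k Rr : R) : {mpoly R[3]} :=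
  (ax ^+ 2 - (2 * k)%:MP * az + (Rr ^+ 2 + k ^+ 2)%:MP) ^+ 2
  - (4 * Rr ^+ 2)%:MP * (ax ^+ 2 + ay ^+ 2).

(* Homogenization with x = X/W, y = Y/W, z = Z/W: projective coordinates
   X = 'X_0, Y = 'X_1, Z = 'X_2, W = 'X_3 of {mpoly R[4]}.
   p^h = sum_m p_m X^m0 Y^m1 Z^m2 W^(deg p - |m|), where deg p = (msize p).-1. *)
Definition homogenize (p : {mpoly R[3]}) : {mpoly R[4]} :=
  \sum_(m <- msupp p)
     (p@_m *: (\prod_(i < 3) 'X_(inord i) ^+ (m i))
       * 'X_(inord 3) ^+ ((msize p).-1 - mdeg m)%N).

(* The homogeneous ideal of the projective closure of T_{k,R,t}:
   the saturation (F1^h, F2^h) : W^oo. *)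
Definition closure_ideal (k Rr t : R) (G : {mpoly R[4]}) : Prop :=
  exists (n : nat) (a b : {mpoly R[4]}),
    'X_(inord 3) ^+ n * G = a * homogenize (F1 t) + b * homogenize (F2 k Rr).

(* Real points of the projective closure (as nonzero homogeneous coordinate
   vectors in R^4; the set is invariant under nonzero scaling). *)
Definition closure_points (k Rr t : R) (v : 'cV[R]_4) : Prop :=
  v != 0 /\ forall G, closure_ideal k Rr t G -> G.@[fun i => v i 0] = 0.

Definition lin_subst (A : 'M[R]_4) (G : {mpoly R[4]}) : {mpoly R[4]} :=
  G \mPo [tuple \sum_(j < 4) A i j *: 'X_j | i < 4].

End Trisector.

From HB Require Import structures.
From mathcomp Require Import all_boot all_order all_algebra.
From mathcomp Require Import mpoly.
From mathcomp Require Import ring.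
Import Order.TTheory GRing.Theory Num.Theory.
Set Implicit Arguments. Unset Strict Implicit.
Local Open Scope ring_scope.

(* The reflection x |-> -x fixes the circle equation F2 and turns F1 for t
   into F1 for -t, because c(-t) = c(t) and s(-t) = -s(t).  Being a diagonal
   sign change that fixes W, it commutes with homogenization (it only
   rescales coefficients by signs and keeps degrees), so it maps the
   saturated ideal for t onto the one for -t; as it is an involution,
   the same holds in the other direction, and the real points of the two
   projective closures correspond under the induced linear map. *)

Section Reflection.
Variables (R : comNzRingType) (n : nat).

Definition refl_sign (i : 'I_n) : R := if val i == 0%N then -1 else 1.

Definition reflect0 : n.-tuple {mpoly R[n]} := [tuple refl_sign i *: 'X_i | i < n].

Definition monomial_sign (m : 'X_{1..n}) : R := \prod_(i < n) refl_sign i ^+ m i.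

Lemma refl_sign_sqr (i : 'I_n) : refl_sign i * refl_sign i = 1.
Proof. by rewrite /refl_sign; case: ifP; rewrite ?mulrNN mulr1. Qed.

Lemma monomial_sign_sqr (m : 'X_{1..n}) : monomial_sign m * monomial_sign m = 1.
Proof.
rewrite /monomial_sign -big_split /= big1 // => i _.
by rewrite -exprMn refl_sign_sqr expr1n.
Qed.

Lemma monomial_sign_rreg (m : 'X_{1..n}) : GRing.rreg (monomial_sign m).
Proof.
move=> a b /= eq_ab.
by rewrite -[a]mulr1 -[b]mulr1 -(monomial_sign_sqr m) !mulrA eq_ab.
Qed.

Lemma comp_reflect0XU (i : 'I_n) : 'X_i \mPo reflect0 = refl_sign i *: 'X_i.
Proof. by rewrite comp_mpolyXU -tnth_nth tnth_mktuple. Qed.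

Lemma comp_reflect0X (m : 'X_{1..n}) :
  'X_[m] \mPo reflect0 = monomial_sign m *: 'X_[m].
Proof.
rewrite comp_mpolyX mpolyXE_id /monomial_sign -scaler_prod.
by apply: eq_bigr => i _; rewrite tnth_mktuple exprZn.
Qed.

Lemma mcoeff_comp_reflect0 (p : {mpoly R[n]}) (m : 'X_{1..n}) :
  (p \mPo reflect0)@_m = p@_m * monomial_sign m.
Proof.
rewrite comp_mpolyEX [in RHS](mpolyE p) !raddf_sum mulr_suml /=.
apply: eq_bigr => m' _; rewrite comp_reflect0X scalerA !mcoeffZ mcoeffX.
by case: eqVneq => [->|_]; rewrite ?mulr0 ?mul0r ?mulr1.
Qed.

Lemma comp_reflect0K (p : {mpoly R[n]}) : (p \mPo reflect0) \mPo reflect0 = p.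
Proof.
by apply/mpolyP => m; rewrite !mcoeff_comp_reflect0 -mulrA monomial_sign_sqr mulr1.
Qed.

Lemma msupp_comp_reflect0 (p : {mpoly R[n]}) :
  perm_eq (msupp (p \mPo reflect0)) (msupp p).
Proof.
apply: uniq_perm => // m.
by rewrite !mcoeff_msupp mcoeff_comp_reflect0 (mulIr_eq0 _ (@monomial_sign_rreg m)).
Qed.

Lemma msize_comp_reflect0 (p : {mpoly R[n]}) : msize (p \mPo reflect0) = msize p.
Proof. by rewrite !msizeE (perm_big _ (msupp_comp_reflect0 p)). Qed.

End Reflection.

Section Trisector.
Variable R : realFieldType.

Lemma refl_sign_W : refl_sign R (inord 3 : 'I_4) = 1.
Proof. by rewrite /refl_sign /= inordK. Qed.

Lemma homogenize_reflect0 (p : {mpoly R[3]}) :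
  homogenize (p \mPo reflect0 R 3) = homogenize p \mPo reflect0 R 4.
Proof.
rewrite /homogenize msize_comp_reflect0 (perm_big _ (msupp_comp_reflect0 p)) /=.
rewrite raddf_sum; apply: eq_bigr => m _ /=.
rewrite rmorphM /= comp_mpolyZ rmorphXn /= comp_reflect0XU refl_sign_W scale1r.
rewrite mcoeff_comp_reflect0 -scalerA rmorph_prod /= /monomial_sign -scaler_prod.
congr (_ *: _ * _); apply: eq_bigr => i _.
rewrite rmorphXn /= comp_reflect0XU exprZn /refl_sign /= !inordK //.
exact: ltn_trans (ltn_ord i) _.
Qed.

Lemma F1_reflect0 (t : R) : F1 t \mPo reflect0 R 3 = F1 (- t).
Proof.
have spar_opp : spar (- t) = - spar t by rewrite /spar sqrrN mulrN mulNr.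
have cpar_opp : cpar (- t) = cpar t by rewrite /cpar sqrrN.
rewrite /F1 spar_opp cpar_opp /ax /ay /az; move: (spar t) (cpar t) => s c.
rewrite !(rmorphB, rmorphD, rmorphM, rmorphXn, rmorph1) /= !comp_mpolyC.
rewrite !comp_reflect0XU /refl_sign /= !inordK // !scale1r mpolyCN !scaleN1r.
ring.
Qed.

Lemma F2_reflect0 (k Rr : R) : F2 k Rr \mPo reflect0 R 3 = F2 k Rr.
Proof.
rewrite /F2 /ax /ay /az !(rmorphB, rmorphD, rmorphM, rmorphXn, rmorph1) /=.
rewrite !comp_mpolyC !comp_reflect0XU /refl_sign /= !inordK // !scale1r !scaleN1r.
ring.
Qed.

Lemma closure_ideal_reflect0 (k Rr t : R) (G : {mpoly R[4]}) :
  closure_ideal k Rr t G -> closure_ideal k Rr (- t) (G \mPo reflect0 R 4).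
Proof.
move=> [e [a [b eqG]]]; exists e, (a \mPo reflect0 R 4), (b \mPo reflect0 R 4).
move/(congr1 (comp_mpoly (reflect0 R 4))): eqG.
rewrite !rmorphD !rmorphM !rmorphXn /= comp_reflect0XU refl_sign_W scale1r.
by rewrite -!homogenize_reflect0 F1_reflect0 F2_reflect0.
Qed.

Definition reflect0_mx : 'M[R]_4 := diag_mx (\row_i refl_sign R i).

Lemma reflect0_mxK : reflect0_mx *m reflect0_mx = 1%:M.
Proof.
rewrite mulmx_diag -diag_const_mx; congr diag_mx.
by apply/rowP => i; rewrite !mxE refl_sign_sqr.
Qed.

Lemma lin_subst_reflect0_mx (G : {mpoly R[4]}) :
  lin_subst reflect0_mx G = G \mPo reflect0 R 4.
Proof.
congr comp_mpoly; apply: eq_mktuple => i.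
rewrite (bigD1 i) //= big1 => [|j /negbTE ji]; last by rewrite mxE eq_sym ji scale0r.
by rewrite !mxE eqxx mulr1n addr0.
Qed.

Lemma closure_ideal_reflect0_mxE (k Rr t : R) (G : {mpoly R[4]}) :
  closure_ideal k Rr t G <-> closure_ideal k Rr (- t) (lin_subst reflect0_mx G).
Proof.
rewrite lin_subst_reflect0_mx; split; first exact: closure_ideal_reflect0.
by move/closure_ideal_reflect0; rewrite opprK comp_reflect0K.
Qed.

Lemma meval_lin_subst (A : 'M[R]_4) (G : {mpoly R[4]}) (v : 'cV[R]_4) :
  (lin_subst A G).@[fun i => v i 0] = G.@[fun i => (A *m v) i 0].
Proof.
rewrite comp_mpoly_meval; apply: meval_eq => i.
rewrite tnth_mktuple raddf_sum !mxE; apply: eq_bigr => j _.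
by rewrite /= mevalZ mevalXU.
Qed.

Lemma closure_points_involution (A : 'M[R]_4) (k Rr t t' : R) :
  A *m A = 1%:M ->
  (forall G, closure_ideal k Rr t G -> closure_ideal k Rr t' (lin_subst A G)) ->
  (forall G, closure_ideal k Rr t' G -> closure_ideal k Rr t (lin_subst A G)) ->
  forall v, closure_points k Rr t' v <-> closure_points k Rr t (A *m v).
Proof.
move=> AK ideal_tt' ideal_t't v; have AAv : A *m (A *m v) = v by rewrite mulmxA AK mul1mx.
split=> -[v_neq0 v_zero]; split.
- by apply: contraNneq v_neq0 => Av0; rewrite -AAv Av0 mulmx0.
- by move=> G /ideal_tt' /v_zero; rewrite meval_lin_subst.
- by apply: contraNneq v_neq0 => ->; rewrite mulmx0.
- by move=> G /ideal_t't /v_zero; rewrite meval_lin_subst AAv.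
Qed.

End Trisector.

Theorem lemma1 (R : realFieldType) (k Rr t : R) :
  0 < Rr -> t != 0 -> k != 0 -> k != 1 ->
  exists A : 'M[R]_4,
    A \in unitmx /\
    (forall G : {mpoly R[4]},
        closure_ideal k Rr t G <-> closure_ideal k Rr (- t) (lin_subst A G)) /\
    (forall v : 'cV[R]_4,
        closure_points k Rr (- t) v <-> closure_points k Rr t (A *m v)).
Proof.
move=> _ _ _ _; exists (reflect0_mx R).
split; first exact: (mulmx1_unit (reflect0_mxK R)).1.
split=> [G|]; first exact: closure_ideal_reflect0_mxE.
apply: closure_points_involution; first exact: reflect0_mxK.
- by move=> G /closure_ideal_reflect0_mxE.
- by move=> G /closure_ideal_reflect0_mxE; rewrite opprK.
Qed.
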